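(* Let $\mathbf{V}_1,\dots,\mathbf{V}_L\in\mathbb{R}^{1\times d}$ be value vectors and $\mathbf{y}$ a target embedding. Let $H$ be the Hessian of the objective of the linear coding problem $\min_\alpha\|\sum_{j=1}^L\alpha_j\mathbf{V}_j-\mathbf{y}\|_2^2$ (subject to $\sum_j\alpha_j=1,\ \alpha_j>0$), and let $\bar H$ be the Hessian of the objective of the group coding problem $\min_{\bar\alpha}\|\sum_{g=1}^k\frac{\bar\alpha_g}{|G_g|}\sum_{j\in G_g}\mathbf{V}_j-\mathbf{y}\|_2^2$ (subject to $\sum_g\bar\alpha_g=1,\ \bar\alpha_g>0$), where $G_1,\dots,G_k$ partition $\{1,\dots,L\}$ and each group has size $|G_g|=m$. For a matrix $A$ let $\kappa(A)=\lambda_{\max}(A)/\lambda_{\min}(A)$ be its condition number, with $\lambda_{\max},\lambda_{\min}$ its maximum and minimum eigenvalues. If $\lambda_{\min}(H)>0$ and $\lambda_{\min}(\bar H)>0$, then $\kappa(\bar H)\le\kappa(H)$. *)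

From HB Require Import structures.
From mathcomp Require Import all_boot all_order all_algebra.
From mathcomp Require Import all_classical all_reals all_analysis.
Set Implicit Arguments. Unset Strict Implicit. Unset Printing Implicit Defensive.
Import Order.TTheory GRing.Theory Num.Theory.
Import numFieldNormedType.Exports.
Local Open Scope classical_set_scope.
Local Open Scope ring_scope.

Definition sqnorm2 (R : realType) (d : nat) (w : 'rV[R]_d) : R :=
  \sum_(i < d) (w 0 i) ^+ 2.

Definition lin_obj (R : realType) (L d : nat) (V : 'I_L -> 'rV[R]_d)
  (y : 'rV[R]_d) (alpha : 'rV[R]_L) : R :=
  sqnorm2 (\sum_(j < L) alpha 0 j *: V j - y).

Definition group_obj (R : realType) (L k d : nat) (m : nat) (grp : 'I_L -> 'I_k)
  (V : 'I_L -> 'rV[R]_d) (y : 'rV[R]_d) (abar : 'rV[R]_k) : R :=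
  sqnorm2 (\sum_(g < k) (abar 0 g / m%:R) *: \sum_(j < L | grp j == g) V j - y).

Definition hessian (R : realType) (n : nat) (f : 'rV[R]_n -> R) (a : 'rV[R]_n)
  : 'M[R]_n :=
  \matrix_(i < n, j < n)
    ('D_(delta_mx 0 i) (fun x => 'D_(delta_mx 0 j) f x) a).

(* largest / smallest eigenvalue (of a real symmetric matrix, whose
   eigenvalues are all real) *)
Definition lambda_max (R : realType) (n : nat) (A : 'M[R]_n) : R :=
  sup [set a : R | eigenvalue A a].
Definition lambda_min (R : realType) (n : nat) (A : 'M[R]_n) : R :=
  inf [set a : R | eigenvalue A a].

Definition kappa (R : realType) (n : nat) (A : 'M[R]_n) : R :=
  lambda_max A / lambda_min A.

From mathcomp Require Import all_boot all_order all_algebra.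
From mathcomp Require Import all_classical all_reals all_analysis.
From mathcomp Require Import ring lra.
Import Order.TTheory GRing.Theory Num.Theory.
Import numFieldNormedType.Exports.
Set Implicit Arguments. Unset Strict Implicit. Unset Printing Implicit Defensive.
Local Open Scope ring_scope.

(* Both objectives are least-squares functions x |-> |x X - y|^2, whose
   Hessian is 2 X X^T.  For the group problem X = P V, where P is 1/m times
   the k x L group-indicator matrix, so Hbar = P H P^T, and P P^T = 1/m
   because the groups are disjoint of size m.  Hence u Hbar u^T is the
   H-form at u P while |u P|^2 = |u|^2 / m: every Rayleigh quotient of Hbar
   is 1/m times a Rayleigh quotient of H.  The extreme eigenvalues of a
   symmetric matrix are its extreme Rayleigh quotients, so
   lambda_max Hbar <= lambda_max H / m and lambda_min Hbar >= lambda_min H / m,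
   which gives kappa Hbar <= kappa H. *)

Section QuadraticDerivative.
Variables (R : realType) (U : normedModType R).
Local Open Scope classical_set_scope.

Lemma derive_quadratic (f : U -> R) (a v : U) (c e : R) :
  (forall h : R, f (h *: v + a) = f a + h * c + h ^+ 2 * e) -> 'D_v f a = c.
Proof.
move=> fE; apply: cvg_lim => //.
have : (fun h : R => c + h * e) @ (0 : R)^' --> c.
  apply: cvg_within_filter.
  suff : (fun h : R => c + h * e) @ (0 : R) --> c + 0 * e by rewrite mul0r addr0.
  by apply: cvgD; [exact: cvg_cst | exact: cvgM cvg_id (cvg_cst _)].
apply: cvg_trans; apply: near_eq_cvg; near=> h.
have h0 : h != 0 by near: h; exact: nbhs_dnbhs_neq.
rewrite /= fE.
have -> : f a + h * c + h ^+ 2 * e - f a = h * (c + h * e) by ring.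
by rewrite scalerA mulVf // scale1r.
Unshelve. all: by end_near.
Qed.

End QuadraticDerivative.

Section SquaredNorm.
Variables (R : realType) (d : nat).
Implicit Types (r s w : 'rV[R]_d).

Lemma sqnorm2E w : sqnorm2 w = (w *m w^T) 0 0.
Proof. by rewrite /sqnorm2 mxE; apply: eq_bigr => i _; rewrite mxE expr2. Qed.

Lemma sqnorm20 : sqnorm2 (0 : 'rV[R]_d) = 0.
Proof. by rewrite sqnorm2E mul0mx mxE. Qed.

Lemma sqnorm2_ge0 w : 0 <= sqnorm2 w.
Proof. by apply: sumr_ge0 => i _; exact: sqr_ge0. Qed.

Lemma sqr_coord_le_sqnorm2 w i : w 0 i ^+ 2 <= sqnorm2 w.
Proof.
by rewrite /sqnorm2 (bigD1 i) //= lerDl; apply: sumr_ge0 => j _; exact: sqr_ge0.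
Qed.

Lemma sqnorm2_gt0 w : w != 0 -> 0 < sqnorm2 w.
Proof.
move=> w0; rewrite lt_def sqnorm2_ge0 andbT; apply: contra w0.
rewrite psumr_eq0 => [/allP w0|i _]; last exact: sqr_ge0.
by apply/eqP/rowP => i; have := w0 i (mem_index_enum _); rewrite sqrf_eq0 mxE => /eqP.
Qed.

Lemma sqnorm2_lineD r s (h : R) :
  sqnorm2 (h *: s + r) = sqnorm2 r + h * (2 * (s *m r^T) 0 0) + h ^+ 2 * sqnorm2 s.
Proof.
rewrite /sqnorm2 mxE !mulr_sumr -!big_split /=.
by apply: eq_bigr => t _; rewrite !mxE; ring.
Qed.

End SquaredNorm.

Section LeastSquares.
Variables (R : realType) (n d : nat) (X : 'M[R]_(n, d)) (y : 'rV[R]_d).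

Lemma derive_sqnorm2_affine (x v : 'rV[R]_n) :
  'D_v (fun x => sqnorm2 (x *m X - y)) x = 2 * (v *m X *m (x *m X - y)^T) 0 0.
Proof.
apply: (derive_quadratic (e := sqnorm2 (v *m X))) => h.
by rewrite mulmxDl -scalemxAl -addrA sqnorm2_lineD.
Qed.

Lemma hessian_sqnorm2_affine (a : 'rV[R]_n) :
  hessian (fun x => sqnorm2 (x *m X - y)) a = 2 *: (X *m X^T).
Proof.
apply/matrixP => i j; rewrite mxE [RHS]mxE.
under eq_fun do rewrite derive_sqnorm2_affine -rowE.
apply: (derive_quadratic (e := 0)) => h.
rewrite mulmxDl -scalemxAl -rowE -addrA linearD linearZ /= mulmxDr -scalemxAr.
rewrite 2!mxE.
have -> : (row j X *m (row i X)^T) 0 0 = (X *m X^T) i j.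
  by rewrite !mxE; apply: eq_bigr => t _; rewrite !mxE mulrC.
ring.
Qed.

End LeastSquares.

Lemma normrM_le_sqrD (R : realDomainType) (x y : R) : `|x * y| <= x ^+ 2 + y ^+ 2.
Proof.
rewrite normrM -[x ^+ 2]real_normK ?num_real // -[y ^+ 2]real_normK ?num_real //.
have := normr_ge0 x; have := normr_ge0 y; nra.
Qed.

Lemma sup_eq_greatest (R : realType) (S : set R) x : S x -> ubound S x -> sup S = x.
Proof.
move=> Sx ubx; apply/eqP; rewrite eq_le ge_sup //=; last by exists x.
by apply: sup_upper_bound => //; split; exists x.
Qed.

Section QuadraticForm.
Variables (R : realType) (n : nat).
Local Open Scope classical_set_scope.
Implicit Types (A : 'M[R]_n) (u v w : 'rV[R]_n).

Definition qform A u v : R := (u *m A *m v^T) 0 0.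

Lemma qform0 A : qform A 0 0 = 0.
Proof. by rewrite /qform !mul0mx mxE. Qed.

Lemma qformC A u v : A^T = A -> qform A u v = qform A v u.
Proof.
move=> symA; have trE (M : 'M[R]_1) : M 0 0 = M^T 0 0 by rewrite mxE.
by rewrite /qform trE !trmx_mul trmxK symA mulmxA.
Qed.

Lemma qform_lineD A u v (t : R) : A^T = A ->
  qform A (u + t *: v) (u + t *: v) =
  qform A u u + 2 * t * qform A u v + t ^+ 2 * qform A v v.
Proof.
move=> symA; have vuE := qformC v u symA; rewrite /qform !mxE in vuE.
rewrite /qform linearD linearZ /= !mulmxDl !mulmxDr -!scalemxAl -!scalemxAr.
rewrite !mxE vuE; ring.
Qed.

Lemma qform_eigenvector A v (mu : R) : v *m A = mu *: v -> qform A v v = mu * sqnorm2 v.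
Proof. by move=> vA; rewrite /qform vA -scalemxAl mxE sqnorm2E. Qed.

Lemma qform_CauchySchwarz A u v : A^T = A -> (forall w, 0 <= qform A w w) ->
  qform A u v ^+ 2 <= qform A u u * qform A v v.
Proof.
move=> symA psdA.
set a := qform A u u; set b := qform A u v; set c := qform A v v.
have quad t : 0 <= a + 2 * t * b + t ^+ 2 * c by rewrite -qform_lineD.
have [c0|cn0] := eqVneq c 0.
  suff -> : b = 0 by rewrite c0 expr0n mulr0.
  apply/eqP/negPn/negP => bn0; have := quad (- (a + 1) / (2 * b)).
  have -> : a + 2 * (- (a + 1) / (2 * b)) * b + (- (a + 1) / (2 * b)) ^+ 2 * c = -1.
    by rewrite c0; field.
  by lra.
have c_gt0 : 0 < c by rewrite lt_def cn0 psdA.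
have := quad (- b / c).
have -> : a + 2 * (- b / c) * b + (- b / c) ^+ 2 * c = a - b ^+ 2 / c by field.
by rewrite subr_ge0 ler_pdivrMr // mulrC.
Qed.

Lemma qformE A u v : qform A u v = \sum_i \sum_j u 0 i * A i j * v 0 j.
Proof.
rewrite /qform mxE exchange_big /=; apply: eq_bigr => j _.
by rewrite !mxE big_distrl /=; apply: eq_bigr.
Qed.

Lemma qform_bounded A : exists2 K, 0 < K & forall v, qform A v v <= K * sqnorm2 v.
Proof.
pose S : R := \sum_i \sum_j `|A i j|.
have S_ge0 : 0 <= S by do 2!apply: sumr_ge0 => ? _.
exists (1 + 2 * S) => [|v]; first by lra.
have entry_le i j : v 0 i * A i j * v 0 j <= `|A i j| * (2 * sqnorm2 v).
  apply: le_trans (ler_norm _) _; rewrite !normrM.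
  have := normrM_le_sqrD (v 0 i) (v 0 j); rewrite normrM.
  have := sqr_coord_le_sqnorm2 v i; have := sqr_coord_le_sqnorm2 v j.
  have := normr_ge0 (A i j); have := normr_ge0 (v 0 i); have := normr_ge0 (v 0 j).
  by nra.
apply: le_trans (_ : _ <= 2 * S * sqnorm2 v) _; last first.
  by have := sqnorm2_ge0 v; nra.
rewrite qformE [2 * S]mulrC -mulrA mulr_suml; apply: ler_sum => i _.
by rewrite mulr_suml; apply: ler_sum => j _.
Qed.

Lemma qform_coercive A : A^T = A -> (forall w, 0 <= qform A w w) -> A \in unitmx ->
  exists2 c, 0 < c & forall v, c * sqnorm2 v <= qform A v v.
Proof.
move=> symA psdA unitA; have [K K_gt0 qK] := qform_bounded (invmx A)^T.
exists K^-1 => [|v]; first by rewrite invr_gt0.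
(* Cauchy-Schwarz at u = v A^-1 and v gives |v|^4 <= (v A^-T v^T) (v A v^T). *)
set u := v *m invmx A.
have uvE : qform A u v = sqnorm2 v by rewrite /qform /u -(mulmxA v) mulVmx // mulmx1 sqnorm2E.
have uuE : qform A u u = qform (invmx A)^T v v.
  by rewrite /qform /u -(mulmxA v) mulVmx // mulmx1 trmx_mul mulmxA.
have := qform_CauchySchwarz u v symA psdA; rewrite uvE uuE => CS.
rewrite mulrC ler_pdivrMr //.
have [->|v_neq0] := eqVneq v 0; first by rewrite qform0 sqnorm20 mul0r.
by have := qK v; have := psdA v; have := sqnorm2_gt0 v_neq0; nra.
Qed.

Lemma sym_eigenvalue_max A : A^T = A -> (0 < n)%N ->
  exists2 lam, eigenvalue A lam & forall v, qform A v v <= lam * sqnorm2 v.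
Proof.
move=> symA n_gt0.
pose Q := [set qform A v v / sqnorm2 v | v in [set v | v != 0]].
have Q_sup : has_sup Q.
  split.
    exists (qform A (const_mx 1) (const_mx 1) / sqnorm2 (const_mx 1 : 'rV[R]_n)).
    exists (const_mx 1) => //=; apply/eqP => /rowP/(_ (Ordinal n_gt0)).
    by rewrite !mxE => /eqP; rewrite oner_eq0.
  have [K _ qK] := qform_bounded A; exists K => _ [v v0 <-].
  by rewrite ler_pdivrMr ?sqnorm2_gt0.
pose lam := sup Q.
have qlam v : qform A v v <= lam * sqnorm2 v.
  have [->|v0] := eqVneq v 0; first by rewrite qform0 sqnorm20 mulr0.
  by rewrite -ler_pdivrMr ?sqnorm2_gt0 //; apply: sup_upper_bound => //; exists v.
exists lam => //.
(* lam%:M - A is positive semidefinite; were it invertible, it would be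
   coercive and lam would not be the least upper bound of Q. *)
pose B := lam%:M - A.
have qB v : qform B v v = lam * sqnorm2 v - qform A v v.
  have entryE (M N : 'M[R]_1) : (lam *: M - N) 0 0 = lam * M 0 0 - N 0 0 by rewrite !mxE.
  by rewrite /qform mulmxBr mulmxBl mul_mx_scalar -scalemxAl entryE -sqnorm2E.
have psdB v : 0 <= qform B v v by rewrite qB subr_ge0.
have symB : B^T = B by rewrite /B linearB /= tr_scalar_mx symA.
have B_singular : B \notin unitmx.
  apply/negP => /(qform_coercive symB psdB) [c c_gt0 qc].
  suff : lam <= lam - c by lra.
  apply: ge_sup => [|_ [v v0 <-]]; first by case: Q_sup.
  by rewrite ler_pdivrMr ?sqnorm2_gt0 // mulrBl; have := qc v; rewrite qB; lra.
have /det0P [w w_neq0 wB] : \det B == 0 by rewrite -[_ == 0]negbK -unitfE -unitmxE.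
apply/eigenvalueP; exists w => //.
by move/eqP: wB; rewrite mulmxBr mul_mx_scalar subr_eq0 => /eqP <-.
Qed.

Lemma eigenvalue_le A (lam mu : R) : (forall v, qform A v v <= lam * sqnorm2 v) ->
  eigenvalue A mu -> mu <= lam.
Proof.
move=> qlam /eigenvalueP [v vA v_neq0].
by have := qlam v; rewrite (qform_eigenvector vA) ler_pM2r // sqnorm2_gt0.
Qed.

Lemma eigenvalue_ge A (lam mu : R) : (forall v, lam * sqnorm2 v <= qform A v v) ->
  eigenvalue A mu -> lam <= mu.
Proof.
move=> qlam /eigenvalueP [v vA v_neq0].
by have := qlam v; rewrite (qform_eigenvector vA) ler_pM2r // sqnorm2_gt0.
Qed.

Lemma lambda_max_sym A : A^T = A -> (0 < n)%N ->
  eigenvalue A (lambda_max A) /\ forall v, qform A v v <= lambda_max A * sqnorm2 v.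
Proof.
move=> symA n_gt0; have [lam eAlam qlam] := sym_eigenvalue_max symA n_gt0.
suff -> : lambda_max A = lam by [].
by apply: sup_eq_greatest => // mu; exact: eigenvalue_le.
Qed.

Lemma lambda_min_sym A : A^T = A -> (0 < n)%N ->
  eigenvalue A (lambda_min A) /\ forall v, lambda_min A * sqnorm2 v <= qform A v v.
Proof.
move=> symA n_gt0.
have symNA : (- A)^T = - A by rewrite linearN /= symA.
have [lam eNAlam qlam] := sym_eigenvalue_max symNA n_gt0.
have eAlam : eigenvalue A (- lam).
  move/eigenvalueP: eNAlam => [v vNA v_neq0]; apply/eigenvalueP; exists v => //.
  by rewrite scaleNr -vNA mulmxN opprK.
have qNlam v : - lam * sqnorm2 v <= qform A v v.
  by have := qlam v; rewrite /qform mulmxN mulNmx mxE mulNr lerNl.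
suff -> : lambda_min A = - lam by [].
rewrite /lambda_min /inf (@sup_eq_greatest _ _ lam) //; first by exists (- lam); rewrite ?opprK.
by move=> _ [mu eAmu <-]; rewrite lerNl; exact: eigenvalue_ge eAmu.
Qed.

Lemma lambda_min_gt0_dim A : 0 < lambda_min A -> (0 < n)%N.
Proof.
case: n A => // A; rewrite /lambda_min.
suff -> : [set a : R | eigenvalue A a] = set0 by rewrite inf0 ltxx.
by apply/seteqP; split => // a /eigenvalueP [w _]; rewrite thinmx0 eqxx.
Qed.

End QuadraticForm.

Section Compression.
Variables (R : realType) (n p : nat) (A : 'M[R]_n) (P : 'M[R]_(p, n)) (t : R).
Hypotheses (symA : A^T = A) (PPt : P *m P^T = t%:M).

Let B := P *m A *m P^T.

Lemma qform_compress u : qform B u u = qform A (u *m P) (u *m P).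
Proof. by rewrite /qform /B trmx_mul !mulmxA. Qed.

Lemma sqnorm2_compress u : sqnorm2 (u *m P) = t * sqnorm2 u.
Proof.
by rewrite !sqnorm2E trmx_mul mulmxA -(mulmxA u) PPt mul_mx_scalar -scalemxAl mxE.
Qed.

Lemma sym_compress : B^T = B.
Proof. by rewrite /B !trmx_mul trmxK symA mulmxA. Qed.

Lemma lambda_max_compress : (0 < n)%N -> (0 < p)%N -> lambda_max B <= t * lambda_max A.
Proof.
move=> n_gt0 p_gt0; have [_ qA] := lambda_max_sym symA n_gt0.
have [eB _] := lambda_max_sym sym_compress p_gt0.
apply: eigenvalue_le eB => u.
by rewrite qform_compress mulrAC -sqnorm2_compress mulrC qA.
Qed.

Lemma lambda_min_compress : (0 < n)%N -> (0 < p)%N -> t * lambda_min A <= lambda_min B.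
Proof.
move=> n_gt0 p_gt0; have [_ qA] := lambda_min_sym symA n_gt0.
have [eB _] := lambda_min_sym sym_compress p_gt0.
apply: eigenvalue_ge eB => u.
by rewrite qform_compress mulrAC -sqnorm2_compress mulrC qA.
Qed.

Lemma kappa_compress : 0 < lambda_min A -> 0 < lambda_min B -> kappa B <= kappa A.
Proof.
move=> lminA_gt0 lminB_gt0.
have n_gt0 := lambda_min_gt0_dim lminA_gt0; have p_gt0 := lambda_min_gt0_dim lminB_gt0.
have lmaxB_le := lambda_max_compress n_gt0 p_gt0.
have lminB_ge := lambda_min_compress n_gt0 p_gt0.
have lminA_le : lambda_min A <= lambda_max A.
  have [eA _] := lambda_min_sym symA n_gt0; have [_ qA] := lambda_max_sym symA n_gt0.
  exact: eigenvalue_le eA.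
have lminB_le : lambda_min B <= lambda_max B.
  have [eB _] := lambda_min_sym sym_compress p_gt0.
  have [_ qB] := lambda_max_sym sym_compress p_gt0.
  exact: eigenvalue_le eB.
rewrite /kappa ler_pdivrMr // mulrAC ler_pdivlMr //.
by nra.
Qed.

End Compression.

Section Grouping.
Variables (R : realType) (L k d : nat) (grp : 'I_L -> 'I_k).

Definition group_mx : 'M[R]_(k, L) := \matrix_(g, j) (grp j == g)%:R.

Lemma group_mx_mul_tr m : (forall g, #|[set j | grp j == g]| = m) ->
  group_mx *m group_mx^T = m%:R%:M.
Proof.
move=> card_grp; apply/matrixP => g h; rewrite !mxE.
under eq_bigr do rewrite !mxE -natrM mulnb.
have [<-|g_neq_h] := eqVneq g h; last first.
  by rewrite big1 // => j _; case: eqP => // ->; rewrite (negbTE g_neq_h).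
rewrite -(card_grp g) mulr1n -sum1_card natr_sum [RHS]big_mkcond /=.
by apply: eq_bigr => j _; rewrite inE andbb; case: eqP.
Qed.

Lemma lin_objE (V : 'I_L -> 'rV[R]_d) y :
  lin_obj V y = fun x => sqnorm2 (x *m \matrix_j V j - y).
Proof.
by apply/funext => x; rewrite /lin_obj mulmx_sum_row; under [in RHS]eq_bigr do rewrite rowK.
Qed.

Lemma group_objE m (V : 'I_L -> 'rV[R]_d) y :
  group_obj m grp V y = fun x => sqnorm2 (x *m (m%:R^-1 *: group_mx *m \matrix_j V j) - y).
Proof.
apply/funext => x; rewrite /group_obj mulmx_sum_row; congr (sqnorm2 (_ - y)).
apply: eq_bigr => g _.
rewrite -scalemxAl linearZ /= row_mul mulmx_sum_row scalerA mulrC.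
congr (_ *: _); rewrite big_mkcond /=; apply: eq_bigr => j _.
by rewrite rowK !mxE; case: eqP => _; rewrite ?scale1r ?scale0r.
Qed.

End Grouping.

Theorem theorem3 (R : realType) (L d k m : nat)
  (V : 'I_L -> 'rV[R]_d) (y : 'rV[R]_d)
  (grp : 'I_L -> 'I_k)
  (hgrp : forall g : 'I_k, #|[set j | grp j == g]| = m)
  (alpha : 'rV[R]_L) (abar : 'rV[R]_k) :
  let H := hessian (lin_obj V y) alpha in
  let Hbar := hessian (group_obj m grp V y) abar in
  0 < lambda_min H -> 0 < lambda_min Hbar ->
  kappa Hbar <= kappa H.
Proof.
rewrite /= lin_objE group_objE !hessian_sqnorm2_affine.
set X := \matrix_j V j; set P := m%:R^-1 *: group_mx R grp.
have -> : 2 *: (P *m X *m (P *m X)^T) = P *m (2 *: (X *m X^T)) *m P^T.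
  by rewrite -(scalemxAr 2 P) -(scalemxAl 2 _ P^T) trmx_mul !mulmxA.
apply: (@kappa_compress _ _ _ _ _ m%:R^-1).
  by rewrite linearZ /= trmx_mul trmxK.
rewrite /P linearZ /= -scalemxAl -scalemxAr scalerA (group_mx_mul_tr R hgrp).
rewrite scale_scalar_mx -mulrA.
by have [->|m_neq0] := eqVneq (m%:R : R) 0; rewrite ?invr0 ?mul0r // mulVf ?mulr1.
Qed.
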